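(* Let $B$ be a nonzero proper Borel ideal of $S=k[x_1,\dots,x_n]$ generated in degrees at most $d$. For $0\le s\le d-1$ let $M_s$ be the set of monomials of degree $s$ that are minimal monomial generators of $\operatorname{trunc}_s(B)$ and do not lie in $B$, and for $m\in M_s$ let $Z_m=\{x_j: mx_j\notin\operatorname{trunc}_{s+1}(B)\}$. Then, as $k$-vector spaces, \[S/B=\bigoplus_{s=0}^{d-1}\ \bigoplus_{m\in M_s} m\cdot k[Z_m],\] i.e. the set of monomials of $S$ not in $B$ is the disjoint union over $s$ and $m\in M_s$ of the sets $\{mu: u \text{ a monomial in the variables } Z_m\}$, and none of these monomials lies in $B$.
   Context: For a monomial $m$ with factorization $x_{i_1}\cdots x_{i_r}$ ($i_1\le\dots\le i_r$), $\operatorname{trunc}_d(m)=x_{i_1}\cdots x_{i_d}$ if $d\le r$ and $=m$ if $d>r$; for a monomial ideal $I$, $\operatorname{trunc}_d(I)$ is the ideal generated by the $d$-truncations of the monomials of $I$; in particular $\operatorname{trunc}_0(B)=(1)$. A Borel ideal is a monomial ideal closed under Borel moves $m\mapsto m\frac{x_{i_1}}{x_{j_1}}\cdots\frac{x_{i_s}}{x_{j_s}}$ ($i_t<j_t$, all $x_{j_t}\mid m$). For a monomial $f$ and a set $Z$ of variables, $f\cdot k[Z]$ is the $k$-span of $\{fu : u$ a monomial in $Z\}$. *)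

(* Monomials of k[x_1,...,x_n] are exponent vectors
   'I_n -> nat; variable x_{i+1} corresponds to index i : 'I_n. *)
From mathcomp Require Import all_boot.
Set Implicit Arguments. Unset Strict Implicit. Unset Printing Implicit Defensive.

Definition mono (n : nat) := {ffun 'I_n -> nat}.

Definition mone n : mono n := [ffun _ => 0].
Definition mmul n (m u : mono n) : mono n := [ffun i => m i + u i].
Definition mvar n (j : 'I_n) : mono n := [ffun i => (i == j) : nat].
Definition mdvd n (m m' : mono n) : bool := [forall i, m i <= m' i].
Definition mdeg n (m : mono n) : nat := \sum_(i < n) m i.

(* factorization x_{i_1} ... x_{i_r} with i_1 <= ... <= i_r, as a sequence *)
Definition mfactors n (m : mono n) : seq 'I_n :=
  flatten [seq nseq (m i) i | i <- enum 'I_n].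
Definition mono_of_seq n (s : seq 'I_n) : mono n := [ffun i => count_mem i s].
(* trunc_d(m) = x_{i_1} ... x_{i_d} (or m if d > r) *)
Definition mtrunc n (d : nat) (m : mono n) : mono n :=
  mono_of_seq (take d (mfactors m)).

(* A monomial ideal is identified with its set of monomials:
   a set closed under multiplication by arbitrary monomials. *)
Definition monideal n (I : mono n -> Prop) : Prop :=
  forall m u, I m -> I (mmul m u).

Definition itrunc n (d : nat) (I : mono n -> Prop) : mono n -> Prop :=
  fun w => exists2 m, I m & mdvd (mtrunc d m) w.

Definition mingen n (J : mono n -> Prop) (m : mono n) : Prop :=
  J m /\ forall m', mdvd m' m -> J m' -> m' = m.

Definition gen_in_deg_le n (I : mono n -> Prop) (d : nat) : Prop :=
  forall m, I m -> exists2 g, I g & (mdvd g m /\ mdeg g <= d).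

Definition borel_move n (m : mono n) (i j : 'I_n) : mono n :=
  [ffun k => if k == i then (m k).+1 else if k == j then (m k).-1 else m k].

Definition borel n (I : mono n -> Prop) : Prop :=
  monideal I /\
  forall m (i j : 'I_n), I m -> (i < j)%N -> 0 < m j -> I (borel_move m i j).

Definition Mset n (B : mono n -> Prop) (s : nat) (m : mono n) : Prop :=
  mdeg m = s /\ mingen (itrunc s B) m /\ ~ B m.

Definition Zset n (B : mono n -> Prop) (s : nat) (m : mono n) (j : 'I_n) : Prop :=
  ~ itrunc s.+1 B (mmul m (mvar j)).

Definition mono_in n (Z : 'I_n -> Prop) (u : mono n) : Prop :=
  forall i, u i != 0 -> Z i.

From mathcomp Require Import all_boot.
From Stdlib Require Import Classical.
Set Implicit Arguments. Unset Strict Implicit. Unset Printing Implicit Defensive.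

(* Write a monomial w outside B as w = m u with m = trunc_s(w), where s is the
   last truncation level at which trunc_s(w) still lies in trunc_s(B).  A Borel
   ideal contains trunc_p(g) as soon as it contains a divisor of g of degree at
   most p, so s < d.  Every variable x_j of u is at least the (s+1)-st variable
   x_k of w; if m x_j were in trunc_{s+1}(B), a Borel move would put
   m x_k = trunc_{s+1}(w) there too, against the maximality of s, so u only uses
   variables of Z_m.  Conversely every variable of Z_m is at least the last
   variable of m, so trunc_s(m u) = m: this recovers m from m u, and
   trunc_{s+1}(m u) = m x_j with x_j in Z_m keeps m u out of B. *)

Section Monomials.
Variable n : nat.
Implicit Types (a b c g h m r u w : mono n) (s t : seq 'I_n) (i j k : 'I_n) (p q : nat).

Lemma mmulC a b : mmul a b = mmul b a.
Proof. by apply/ffunP=> i; rewrite !ffunE addnC. Qed.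

Lemma mmulA a b c : mmul a (mmul b c) = mmul (mmul a b) c.
Proof. by apply/ffunP=> i; rewrite !ffunE addnA. Qed.

Lemma mmul1m a : mmul (mone n) a = a.
Proof. by apply/ffunP=> i; rewrite !ffunE. Qed.

Lemma mmulm1 a : mmul a (mone n) = a.
Proof. by rewrite mmulC mmul1m. Qed.

Lemma mmulI a : injective (mmul a).
Proof. by move=> b c /ffunP eq_ab; apply/ffunP=> i; have := eq_ab i; rewrite !ffunE => /addnI. Qed.

Lemma mvar_inj : injective (@mvar n).
Proof. by move=> i j /ffunP/(_ i); rewrite !ffunE eqxx; case: eqP. Qed.

Lemma mdvd_refl a : mdvd a a.
Proof. exact/forallP. Qed.

Lemma mdvd_trans b a c : mdvd a b -> mdvd b c -> mdvd a c.
Proof. by move=> /forallP ab /forallP bc; apply/forallP=> i; apply: leq_trans (ab i) (bc i). Qed.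

Lemma mdvd_mulr a b : mdvd a (mmul a b).
Proof. by apply/forallP=> i; rewrite ffunE leq_addr. Qed.

Lemma mdvd_mul2l a b c : mdvd b c -> mdvd (mmul a b) (mmul a c).
Proof. by move=> /forallP bc; apply/forallP=> i; rewrite !ffunE leq_add2l. Qed.

Lemma mdvd1m a : mdvd (mone n) a.
Proof. by apply/forallP=> i; rewrite ffunE. Qed.

Lemma monideal_dvd (I : mono n -> Prop) a b : monideal I -> I a -> mdvd a b -> I b.
Proof.
move=> idI Ia /forallP ab; suff -> : b = mmul a [ffun i => b i - a i] by exact: idI.
by apply/ffunP=> i; rewrite !ffunE subnKC.
Qed.

Lemma mvar_factor g j : 0 < g j -> exists h, g = mmul (mvar j) h.
Proof.
move=> gj; exists [ffun i => g i - (i == j)]; apply/ffunP=> i.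
by rewrite !ffunE subnKC //; case: eqP => [->|].
Qed.

Lemma mdvd_mulvar g m j : mdvd g (mmul m (mvar j)) ->
  mdvd g m \/ exists2 h, g = mmul (mvar j) h & mdvd h m.
Proof.
move=> /forallP g_dvd; have [gj_le|mj_lt] := leqP (g j) (m j).
  left; apply/forallP=> i; have [->//|ij] := eqVneq i j.
  by have := g_dvd i; rewrite !ffunE (negbTE ij) addn0.
right; have [h eq_g] := mvar_factor (leq_ltn_trans (leq0n _) mj_lt); exists h => //.
apply/forallP=> i; have := g_dvd i; rewrite eq_g !ffunE addnC.
by case: (i == j); rewrite ?addn1 ?ltnS ?addn0.
Qed.

Lemma ltn_sum_ord (F G : 'I_n -> nat) j :
  (forall i, F i <= G i) -> F j < G j -> \sum_(i < n) F i < \sum_(i < n) G i.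
Proof.
move=> FG FGj; rewrite (bigD1 j) //= [X in _ < X](bigD1 j) //= -addSn.
by apply: leq_add => //; apply: leq_sum.
Qed.

Lemma mdeg_mul a b : mdeg (mmul a b) = mdeg a + mdeg b.
Proof. by rewrite /mdeg -big_split; apply: eq_bigr => i _; rewrite ffunE. Qed.

Lemma mdeg_mvar j : mdeg (mvar j) = 1.
Proof.
rewrite /mdeg (bigD1 j) //= ffunE eqxx big1 // => i ij.
by rewrite ffunE (negbTE ij).
Qed.

Lemma mdeg_mone : mdeg (mone n) = 0.
Proof. by rewrite /mdeg big1 // => i _; rewrite ffunE. Qed.

Lemma mdeg_mulvar m j : mdeg (mmul m (mvar j)) = (mdeg m).+1.
Proof. by rewrite mdeg_mul mdeg_mvar addn1. Qed.

Lemma leq_mdeg a b : mdvd a b -> mdeg a <= mdeg b.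
Proof. by move=> /forallP ab; apply: leq_sum. Qed.

Lemma mdvd_mdeg_eq a b : mdvd a b -> mdeg b <= mdeg a -> a = b.
Proof.
move=> /forallP ab deg_ba; apply/ffunP=> i; apply/eqP; rewrite eqn_leq ab leqNgt.
by apply/negP=> /(ltn_sum_ord ab); rewrite ltnNge deg_ba.
Qed.

Lemma mdeg_eq0 a : mdeg a = 0 -> a = mone n.
Proof. by move=> a0; apply/esym/mdvd_mdeg_eq; rewrite ?mdvd1m ?a0. Qed.

Definition supp_le a b := forall i j, 0 < a i -> 0 < b j -> i <= j.

Lemma supp_mul a b i : (0 < mmul a b i) = (0 < a i) || (0 < b i).
Proof. by rewrite ffunE addn_gt0. Qed.

Lemma supp_mvar i j : (0 < mvar j i) = (i == j).
Proof. by rewrite ffunE; case: eqP. Qed.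

Lemma supp_le_mull a b c : supp_le (mmul a b) c <-> supp_le a c /\ supp_le b c.
Proof.
split=> [le_abc|[le_ac le_bc] i j]; last by rewrite supp_mul => /orP[]; [apply: le_ac|apply: le_bc].
by split=> i j ai; apply: le_abc; rewrite supp_mul ai ?orbT.
Qed.

Lemma supp_le_mulr a b c : supp_le a (mmul b c) <-> supp_le a b /\ supp_le a c.
Proof.
split=> [le_abc|[le_ab le_ac] i j ai]; last by rewrite supp_mul => /orP[]; [apply: le_ab|apply: le_ac].
by split=> i j ai cj; apply: le_abc; rewrite // supp_mul cj ?orbT.
Qed.

Lemma supp_le_mvarr a k j : supp_le a (mvar k) -> k <= j -> supp_le a (mvar j).
Proof.
move=> le_ak kj i l ai; rewrite supp_mvar => /eqP->.
by apply: leq_trans kj; apply: le_ak ai _; rewrite supp_mvar.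
Qed.

Lemma supp_le_mvarl a j k : supp_le (mvar k) a -> j <= k -> supp_le (mvar j) a.
Proof.
move=> le_ka jk i l; rewrite supp_mvar => /eqP-> al.
by apply: leq_trans jk _; apply: le_ka al; rewrite supp_mvar.
Qed.

Definition ord_le : rel 'I_n := fun i j => i <= j.

Lemma ord_le_trans : transitive ord_le.
Proof. by move=> j i k; apply: leq_trans. Qed.

Lemma ord_le_anti : antisymmetric ord_le.
Proof. by move=> i j le_ij; apply/val_inj/eqP; rewrite eqn_leq. Qed.

Lemma mono_of_seq_cat s t :
  mono_of_seq (s ++ t) = mmul (mono_of_seq s) (mono_of_seq t).
Proof. by apply/ffunP=> i; rewrite !ffunE count_cat. Qed.

Lemma mono_of_seq1 j : mono_of_seq [:: j] = mvar j.
Proof. by apply/ffunP=> i; rewrite !ffunE /= addn0 eq_sym. Qed.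

Lemma mono_of_seq_nil : mono_of_seq [::] = mone n.
Proof. by apply/ffunP=> i; rewrite !ffunE. Qed.

Lemma supp_mono_of_seq s i : (0 < mono_of_seq s i) = (i \in s).
Proof. by rewrite ffunE -has_count has_pred1. Qed.

Lemma mdeg_mono_of_seq s : mdeg (mono_of_seq s) = size s.
Proof.
elim: s => [|j s IHs]; first by rewrite mono_of_seq_nil mdeg_mone.
by rewrite -cat1s mono_of_seq_cat mdeg_mul mono_of_seq1 mdeg_mvar IHs.
Qed.

Lemma count_flatten_nseq (f : 'I_n -> nat) s i : uniq s ->
  count_mem i (flatten [seq nseq (f j) j | j <- s]) = if i \in s then f i else 0.
Proof.
elim: s => [|j s IHs] //= /andP[js s_uniq]; rewrite count_cat IHs // count_nseq in_cons.
have [->|ij] /= := eqVneq i j; first by rewrite eqxx (negbTE js) mul1n addn0.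
by rewrite eq_sym (negbTE ij).
Qed.

Lemma mfactorsK m : mono_of_seq (mfactors m) = m.
Proof. by apply/ffunP=> i; rewrite ffunE count_flatten_nseq ?enum_uniq ?mem_enum. Qed.

Lemma mfactors_sorted m : sorted ord_le (mfactors m).
Proof.
rewrite sorted_pairwise; last exact: ord_le_trans.
have : pairwise (fun i j : 'I_n => i < j) (enum 'I_n).
  rewrite -sorted_pairwise; last exact: ltn_trans.
  by have := iota_ltn_sorted 0 n; rewrite -val_enum_ord sorted_map.
rewrite /mfactors; elim: (enum 'I_n) => //= i e IHe /andP[lt_ie lt_e].
rewrite pairwise_cat IHe // andbT; apply/andP; split.
  apply/allrelP=> j l; rewrite mem_nseq => /andP[_ /eqP->] /flatten_mapP[l' l'e].
  by rewrite mem_nseq => /andP[_ /eqP->]; apply/ltnW; move/allP: lt_ie; apply.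
by elim: (m i) => //= q ->; rewrite andbT; apply/allP=> j; rewrite mem_nseq => /andP[_ /eqP->]; apply: leqnn.
Qed.

Lemma mono_of_seqK s : sorted ord_le s -> mfactors (mono_of_seq s) = s.
Proof.
move=> s_sorted; apply: (sorted_eq ord_le_trans ord_le_anti) => //; first exact: mfactors_sorted.
apply/allP=> i _; apply/eqP.
by have /ffunP/(_ i) := mfactorsK (mono_of_seq s); rewrite !ffunE.
Qed.

Lemma mem_mfactors m i : (i \in mfactors m) = (0 < m i).
Proof. by rewrite -supp_mono_of_seq mfactorsK. Qed.

Lemma size_mfactors m : size (mfactors m) = mdeg m.
Proof. by rewrite -mdeg_mono_of_seq mfactorsK. Qed.

Lemma mfactors_mul a b : supp_le a b -> mfactors (mmul a b) = mfactors a ++ mfactors b.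
Proof.
move=> le_ab; rewrite -{1}(mfactorsK a) -{1}(mfactorsK b) -mono_of_seq_cat mono_of_seqK //.
rewrite sorted_pairwise; last exact: ord_le_trans.
rewrite pairwise_cat -!sorted_pairwise ?mfactors_sorted ?andbT; try exact: ord_le_trans.
by apply/allrelP=> i j; rewrite !mem_mfactors; apply: le_ab.
Qed.

Lemma mtrunc_mul p a b : mdeg a = p -> supp_le a b -> mtrunc p (mmul a b) = a.
Proof. by move=> <- le_ab; rewrite /mtrunc mfactors_mul // take_size_cat ?mfactorsK ?size_mfactors. Qed.

Lemma mtrunc_mul_leq p a b : p <= mdeg a -> supp_le a b -> mtrunc p (mmul a b) = mtrunc p a.
Proof. by move=> pa le_ab; rewrite /mtrunc mfactors_mul // takel_cat // size_mfactors. Qed.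

Lemma mtrunc_small p g : mdeg g <= p -> mtrunc p g = g.
Proof. by move=> gp; rewrite /mtrunc take_oversize ?mfactorsK // size_mfactors. Qed.

Lemma mtrunc0 g : mtrunc 0 g = mone n.
Proof. by rewrite /mtrunc take0 mono_of_seq_nil. Qed.

Lemma mtrunc_mtrunc p q g : p <= q -> mtrunc p (mtrunc q g) = mtrunc p g.
Proof.
move=> pq; rewrite {1}/mtrunc mono_of_seqK ?take_takel //.
exact/take_sorted/mfactors_sorted.
Qed.

Lemma mdeg_mtrunc p g : mdeg (mtrunc p g) = minn p (mdeg g).
Proof. by rewrite mdeg_mono_of_seq size_take_min size_mfactors. Qed.

Lemma mdeg_mtrunc_leq p g : p <= mdeg g -> mdeg (mtrunc p g) = p.
Proof. by move=> pg; rewrite mdeg_mtrunc; apply/minn_idPl. Qed.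

Lemma mtrunc_dvd p g : mdvd (mtrunc p g) g.
Proof.
apply/forallP=> i; rewrite -{2}(mfactorsK g) !ffunE.
by rewrite -{2}(cat_take_drop p (mfactors g)) count_cat leq_addr.
Qed.

Lemma mtrunc_complement p g : exists2 r, g = mmul (mtrunc p g) r & supp_le (mtrunc p g) r.
Proof.
exists (mono_of_seq (drop p (mfactors g))).
  by rewrite -mono_of_seq_cat cat_take_drop mfactorsK.
have : allrel ord_le (take p (mfactors g)) (drop p (mfactors g)).
  have := mfactors_sorted g; rewrite -{1}(cat_take_drop p (mfactors g)) sorted_pairwise.
    by rewrite pairwise_cat => /and3P[].
  exact: ord_le_trans.
by move=> /allrelP le_td i j; rewrite !supp_mono_of_seq; apply: le_td.
Qed.

Lemma mvar_head u : 0 < mdeg u ->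
  exists k r, u = mmul (mvar k) r /\ supp_le (mvar k) r.
Proof.
rewrite -size_mfactors => u_gt0; have [r eq_u le_r] := mtrunc_complement 1 u.
suff [k eq_k] : exists k, mtrunc 1 u = mvar k by exists k, r; rewrite -eq_k.
by rewrite /mtrunc; case: (mfactors u) u_gt0 => // k s _; exists k; rewrite /= take0 mono_of_seq1.
Qed.

Lemma mtrunc_succ p g : p < mdeg g -> exists k r,
  [/\ g = mmul (mmul (mtrunc p g) (mvar k)) r, supp_le (mtrunc p g) (mvar k)
    & supp_le (mmul (mtrunc p g) (mvar k)) r].
Proof.
move=> pg; have [r0 eq_g le_r0] := mtrunc_complement p g.
have /mvar_head[k [r [eq_r0 le_kr]]] : 0 < mdeg r0.
  by rewrite -(ltn_add2l p) addn0 -{2}(mdeg_mtrunc_leq (ltnW pg)) -mdeg_mul -eq_g.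
move: le_r0; rewrite eq_r0 supp_le_mulr => -[le_k le_r].
by exists k, r; split; rewrite -?mmulA -?eq_r0 // supp_le_mull.
Qed.

Lemma mmulCA a b c : mmul a (mmul b c) = mmul b (mmul a c).
Proof. by rewrite !mmulA (mmulC a). Qed.

Lemma borel_move_mvar h j k : k != j -> borel_move (mmul (mvar j) h) k j = mmul (mvar k) h.
Proof.
move=> kj; apply/ffunP=> i; rewrite !ffunE.
have [->|ik] := eqVneq i k; first by rewrite ?eqxx (negbTE kj).
by have [->|] := eqVneq i j; rewrite ?eqxx.
Qed.

End Monomials.

Lemma ex_last_step (P : nat -> Prop) N : P 0 ->
  exists x, [/\ x <= N, P x & x < N -> ~ P x.+1].
Proof.
move=> P0; elim: N => [|N [x [xN Px x_last]]]; first by exists 0.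
move: xN; rewrite leq_eqVlt => /orP[/eqP eq_xN|xN]; last first.
  by exists x; split=> [|//|_]; [exact: leqW (ltnW xN) | exact: x_last].
subst x.
have [PN1|not_PN1] := classic (P N.+1); first by exists N.+1; rewrite ltnn.
by exists N; rewrite leqnSn.
Qed.

Section Borel.
Variables (n : nat) (B : mono n -> Prop).
Hypothesis borelB : borel B.
Implicit Types (a g h m r u w : mono n) (i j k : 'I_n) (p q : nat).

Let idealB : monideal B := proj1 borelB.

Lemma borel_lower_var h j k : B (mmul (mvar j) h) -> k <= j -> B (mmul (mvar k) h).
Proof.
move=> Bjh; have [->//|kj le_kj] := eqVneq k j.
rewrite -(borel_move_mvar h kj); apply: (proj2 borelB) => //.
  by rewrite ltn_neqAle le_kj andbT.
by rewrite supp_mul supp_mvar eqxx.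
Qed.

(* Borel moves towards [a] strictly decrease this measure. *)
Definition mexcess a g := \sum_(i < n) (g i - a i).

Lemma borel_excess_step a r g : supp_le a r -> B g -> mdvd g (mmul a r) ->
    mdeg g <= mdeg a -> ~~ mdvd g a ->
  exists g', [/\ B g', mdvd g' (mmul a r), mdeg g' <= mdeg a & mexcess a g' < mexcess a g].
Proof.
move=> le_ar Bg g_dvd g_deg /forallPn[j]; rewrite -ltnNge => aj_lt.
have gl_le l : g l <= a l + r l by have := forallP g_dvd l; rewrite ffunE.
have [i gi_lt] : exists i, g i < a i.
  apply/existsP; apply: contraTT g_deg => /existsPn ge_ga; rewrite -ltnNge.
  by apply: (ltn_sum_ord (j := j)) aj_lt => l; rewrite leqNgt ge_ga.
have ij : i < j.
  have rj : 0 < r j by move: (leq_trans aj_lt (gl_le j)); rewrite -{1}[a j]addn0 ltn_add2l.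
  rewrite ltn_neqAle le_ar ?(leq_ltn_trans _ gi_lt) // andbT.
  by apply: contraTneq gi_lt => /val_inj->; rewrite -leqNgt ltnW.
have [h eq_g] := mvar_factor (leq_ltn_trans (leq0n _) aj_lt).
have gE l : g l = h l + (l == j) by rewrite eq_g !ffunE addnC.
have g'E l : mmul (mvar i) h l = h l + (l == i) by rewrite !ffunE addnC.
have [ij' ji] : i != j /\ j != i by rewrite !neq_ltn ij orbT.
exists (mmul (mvar i) h); split.
- by apply: (borel_lower_var (j := j)); rewrite -?eq_g // ltnW.
- apply/forallP=> l; rewrite g'E ffunE; have := gl_le l; rewrite gE.
  have [->|li] := eqVneq l i; last by rewrite addn0 => /(leq_trans _)->; rewrite ?leq_addr.
  by move: gi_lt; rewrite gE (negbTE ij') addn0 addn1 => /leq_trans->; rewrite ?leq_addr.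
- by rewrite mdeg_mul mdeg_mvar -(mdeg_mvar j) -mdeg_mul -eq_g.
apply: (ltn_sum_ord (j := j)) => [l|].
  rewrite g'E gE; have [->|li] := eqVneq l i; last by rewrite addn0 leq_sub2r ?leq_addr.
  rewrite (negbTE ij') addn0 addn1.
  by move: gi_lt; rewrite gE (negbTE ij') addn0 -subn_eq0 => /eqP->.
rewrite g'E gE eqxx (negbTE ji) addn0 addn1 subSn //.
by move: aj_lt; rewrite gE eqxx addn1.
Qed.


Lemma borel_initial a r g : supp_le a r -> B g -> mdvd g (mmul a r) -> mdeg g <= mdeg a -> B a.
Proof.
move=> le_ar; have [N lt_N] := ubnP (mexcess a g); elim: N g lt_N => // N IHN g.
rewrite ltnS => excess_le Bg g_dvd g_deg.
have [g_dvd_a|not_dvd] := boolP (mdvd g a); first exact: monideal_dvd idealB Bg g_dvd_a.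
have [g' [Bg' g'_dvd g'_deg lt_excess]] := borel_excess_step le_ar Bg g_dvd g_deg not_dvd.
exact: IHN g' (leq_trans lt_excess excess_le) Bg' g'_dvd g'_deg.
Qed.

Lemma borel_mtrunc p g g0 : B g0 -> mdvd g0 g -> mdeg g0 <= p -> B (mtrunc p g).
Proof.
move=> Bg0 g0_dvd g0_deg; have [gp|pg] := leqP (mdeg g) p.
  by rewrite mtrunc_small //; apply: monideal_dvd idealB Bg0 g0_dvd.
have [r eq_g le_r] := mtrunc_complement p g.
by apply: (borel_initial le_r Bg0); rewrite -?eq_g // mdeg_mtrunc_leq // ltnW.
Qed.

Lemma itrunc_sub d s w : gen_in_deg_le B d -> d <= s -> itrunc s B w -> B w.
Proof.
move=> genB ds [g Bg g_dvd]; have [g0 Bg0 [g0_dvd g0_deg]] := genB g Bg.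
exact: monideal_dvd idealB (borel_mtrunc Bg0 g0_dvd (leq_trans g0_deg ds)) g_dvd.
Qed.

Lemma itrunc_mtrunc p g : B g -> itrunc p B (mtrunc p g).
Proof. by exists g => //; apply: mdvd_refl. Qed.

Lemma itrunc_lower_last g m r j k : B g -> g = mmul (mmul m (mvar k)) r ->
  supp_le (mmul m (mvar k)) r -> j <= k -> itrunc (mdeg m).+1 B (mmul m (mvar j)).
Proof.
move=> Bg eq_g /supp_le_mull[le_mr le_kr] jk; exists (mmul (mvar j) (mmul m r)).
  by apply: (borel_lower_var (j := k)) jk; rewrite -mmulCA mmulA -eq_g.
rewrite mmulCA mmulA mtrunc_mul ?mdeg_mulvar ?mdvd_refl // supp_le_mull.
by split=> //; apply: supp_le_mvarl le_kr jk.
Qed.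

Lemma itrunc_mulvar_lower m j k : supp_le m (mvar k) -> k <= j ->
  itrunc (mdeg m).+1 B (mmul m (mvar j)) -> itrunc (mdeg m).+1 B (mmul m (mvar k)).
Proof.
move=> le_mk kj [g Bg g_dvd]; have [g_small|g_large] := leqP (mdeg g) (mdeg m).+1.
  rewrite mtrunc_small // in g_dvd; have [g_dvd_m|[h eq_g h_dvd]] := mdvd_mulvar g_dvd.
    by exists g; rewrite // mtrunc_small //; apply: mdvd_trans g_dvd_m (mdvd_mulr _ _).
  exists (mmul (mvar k) h); first by apply: (borel_lower_var (j := j)); rewrite -?eq_g.
  rewrite mtrunc_small; last by rewrite mdeg_mul mdeg_mvar -(mdeg_mvar j) -mdeg_mul -eq_g.
  by rewrite (mmulC m); apply: mdvd_mul2l.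
have eq_t : mtrunc (mdeg m).+1 g = mmul m (mvar j).
  by apply: mdvd_mdeg_eq g_dvd _; rewrite mdeg_mtrunc_leq ?mdeg_mulvar // ltnW.
have [k' [r [eq_g le_k' le_r]]] := mtrunc_succ (ltnW g_large).
have eq_m : mtrunc (mdeg m) g = m.
  by rewrite -(mtrunc_mtrunc _ (leqnSn _)) eq_t mtrunc_mul //; apply: supp_le_mvarr le_mk kj.
rewrite eq_m in eq_g le_k' le_r.
have eq_k' : k' = j.
  by move: eq_t; rewrite {1}eq_g mtrunc_mul ?mdeg_mulvar // => /mmulI/mvar_inj.
by subst k'; apply: itrunc_lower_last Bg eq_g le_r kj.
Qed.

Lemma Mset_witness p m : Mset B p m -> exists g, [/\ B g, mtrunc p g = m & p < mdeg g].
Proof.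
move=> [_ [[[g Bg g_dvd] m_min] m_notin]].
have eq_m : mtrunc p g = m by apply: m_min => //; apply: itrunc_mtrunc.
exists g; split; rewrite // ltnNge; apply/negP => gp; apply: m_notin.
by rewrite -eq_m mtrunc_small.
Qed.

Lemma Zset_supp_le p m j : Mset B p m -> Zset B p m j -> supp_le m (mvar j).
Proof.
move=> Mm; have [deg_m _] := Mm; have [g [Bg eq_m pg]] := Mset_witness Mm.
have [k [r [eq_g le_k le_r]]] := mtrunc_succ pg; rewrite eq_m in eq_g le_k le_r.
move=> Zj; apply: (supp_le_mvarr le_k); rewrite leqNgt; apply/negP => jk; apply: Zj.
by rewrite -deg_m; apply: itrunc_lower_last Bg eq_g le_r (ltnW jk).
Qed.

Lemma mono_in_Zset_supp_le p m u : Mset B p m -> mono_in (Zset B p m) u -> supp_le m u.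
Proof.
move=> Mm Zu i j mi uj; apply: (Zset_supp_le Mm (Zu j _)) mi _; first by rewrite -lt0n.
by rewrite supp_mvar.
Qed.

Lemma Mset_mtrunc_succ p m u : Mset B p m -> mono_in (Zset B p m) u -> 0 < mdeg u ->
  exists2 j, Zset B p m j & mtrunc p.+1 (mmul m u) = mmul m (mvar j).
Proof.
move=> Mm Zu /mvar_head[j [r [eq_u le_jr]]]; have [deg_m _] := Mm.
have Zj : Zset B p m j by apply: Zu; rewrite eq_u -lt0n supp_mul supp_mvar eqxx.
have := mono_in_Zset_supp_le Mm Zu; rewrite eq_u => /supp_le_mulr[_ le_mr].
exists j => //; rewrite mmulA mtrunc_mul ?mdeg_mulvar ?deg_m //.
by apply/supp_le_mull.
Qed.

Lemma Mset_Zset_notin p m u : Mset B p m -> mono_in (Zset B p m) u -> ~ B (mmul m u).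
Proof.
move=> Mm Zu; have [u0|u_gt0] := posnP (mdeg u).
  by rewrite (mdeg_eq0 u0) mmulm1; case: Mm => _ [].
have [j Zj eq_t] := Mset_mtrunc_succ Mm Zu u_gt0.
by move=> /(itrunc_mtrunc p.+1); rewrite eq_t.
Qed.

Lemma Mset_Zset_lt p q m u m' u' : p < q ->
    Mset B p m -> mono_in (Zset B p m) u ->
    Mset B q m' -> mono_in (Zset B q m') u' -> mmul m u <> mmul m' u'.
Proof.
move=> pq Mm Zu Mm' Zu' eq_mu; have [deg_m _] := Mm; have [deg_m' _] := Mm'.
have [u0|u_gt0] := posnP (mdeg u).
  move: pq; rewrite -deg_m -deg_m' -(addn0 (mdeg m)) -u0 -mdeg_mul eq_mu mdeg_mul.
  by rewrite ltnNge leq_addr.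
have [j Zj eq_t] := Mset_mtrunc_succ Mm Zu u_gt0; apply: Zj.
have [g' [Bg' eq_m' _]] := Mset_witness Mm'.
rewrite -eq_t eq_mu (mtrunc_mul_leq _ (mono_in_Zset_supp_le Mm' Zu')) ?deg_m' //.
by rewrite -eq_m' mtrunc_mtrunc //; apply: itrunc_mtrunc.
Qed.

Lemma Mset_Zset_inj p q m u m' u' :
    Mset B p m -> mono_in (Zset B p m) u ->
    Mset B q m' -> mono_in (Zset B q m') u' ->
  mmul m u = mmul m' u' -> [/\ p = q, m = m' & u = u'].
Proof.
move=> Mm Zu Mm' Zu' eq_mu; have [deg_m _] := Mm; have [deg_m' _] := Mm'.
have [pq|qp|eq_pq] := ltngtP p q.
- by case: (Mset_Zset_lt pq Mm Zu Mm' Zu').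
- by case: (Mset_Zset_lt qp Mm' Zu' Mm Zu).
have eq_m : m = m'.
  rewrite -(mtrunc_mul deg_m (mono_in_Zset_supp_le Mm Zu)) eq_mu.
  by rewrite (mtrunc_mul _ (mono_in_Zset_supp_le Mm' Zu')) // deg_m' eq_pq.
by subst m'; split=> //; apply: mmulI eq_mu.
Qed.

Lemma Mset_mtrunc p w : ~ B w -> p <= mdeg w -> itrunc p B (mtrunc p w) -> Mset B p (mtrunc p w).
Proof.
move=> w_notin pw tw; have deg_t := mdeg_mtrunc_leq pw.
have t_notin : ~ B (mtrunc p w).
  by move=> Bt; apply: w_notin; apply: monideal_dvd idealB Bt (mtrunc_dvd p w).
split=> //; split=> //; split=> // m' m'_dvd [g Bg g_dvd].
have [gp|pg] := leqP (mdeg g) p.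
  rewrite mtrunc_small // in g_dvd; case: t_notin.
  exact: monideal_dvd idealB Bg (mdvd_trans g_dvd m'_dvd).
apply: mdvd_mdeg_eq m'_dvd _; rewrite deg_t -(mdeg_mtrunc_leq (ltnW pg)).
exact: leq_mdeg g_dvd.
Qed.

Lemma Mset_Zset_cover d w : gen_in_deg_le B d -> (exists m, B m) -> ~ B w ->
  exists s m u, [/\ s < d, Mset B s m, mono_in (Zset B s m) u & w = mmul m u].
Proof.
move=> genB [m0 Bm0] w_notin.
have t0 : itrunc 0 B (mtrunc 0 w) by exists m0; rewrite // !mtrunc0 mdvd_refl.
have [s [sw tw s_last]] := @ex_last_step (fun s => itrunc s B (mtrunc s w)) (mdeg w) t0.
have sd : s < d.
  rewrite ltnNge; apply/negP => ds; apply: w_notin.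
  exact: monideal_dvd idealB (itrunc_sub genB ds tw) (mtrunc_dvd s w).
exists s, (mtrunc s w); move: (sw) (Mset_mtrunc w_notin sw tw).
rewrite leq_eqVlt => /orP[/eqP eq_s|lt_s] Mt.
  exists (mone n); split=> //; first by move=> i; rewrite ffunE.
  by rewrite mmulm1 mtrunc_small ?eq_s.
have [k [r [eq_w le_k le_r]]] := mtrunc_succ lt_s.
exists (mmul (mvar k) r); split=> //; last by rewrite mmulA -eq_w.
have Z_ge_k j : k <= j -> Zset B s (mtrunc s w) j.
  have deg_t := mdeg_mtrunc_leq sw.
  have eq_t1 : mtrunc s.+1 w = mmul (mtrunc s w) (mvar k).
    by rewrite {1}eq_w mtrunc_mul ?mdeg_mulvar ?deg_t.
  move=> kj tj; apply: (s_last lt_s); rewrite eq_t1 -{1}deg_t.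
  by apply: (itrunc_mulvar_lower le_k kj); rewrite deg_t.
move/supp_le_mull: le_r => [_ le_kr] j; rewrite -lt0n supp_mul supp_mvar.
case/orP=> [/eqP->|rj]; first exact: Z_ge_k.
by apply: Z_ge_k; apply: le_kr rj; rewrite supp_mvar.
Qed.

End Borel.

Theorem theorem4p1 (n d : nat) (B : mono n -> Prop) :
  borel B ->
  (exists m, B m) ->
  ~ B (mone n) ->
  gen_in_deg_le B d ->
  [/\ (* none of the monomials m u lies in B *)
      (forall s m u, s < d -> Mset B s m -> mono_in (Zset B s m) u ->
         ~ B (mmul m u)),
      (* every monomial not in B is of the form m u *)
      (forall w, ~ B w ->
         exists s m u, [/\ s < d, Mset B s m, mono_in (Zset B s m) u &
                          w = mmul m u]) &
      (* the union is disjoint *)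
      (forall s m u s' m' u', s < d -> Mset B s m -> mono_in (Zset B s m) u ->
         s' < d -> Mset B s' m' -> mono_in (Zset B s' m') u' ->
         mmul m u = mmul m' u' -> [/\ s = s', m = m' & u = u'])].
Proof.
move=> borelB B_neq0 _ genB; split.
- by move=> s m u _; apply: Mset_Zset_notin.
- by move=> w; apply: Mset_Zset_cover genB B_neq0.
- by move=> s m u s' m' u' _ Mm Zu _; apply: Mset_Zset_inj.
Qed.
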